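(* Let $\Gamma$ be a Neumaier graph with parameters $(n,k,\lambda;a,c)$. If $c=k$, then $\Gamma$ is the cycle graph $C_4$.
   Context: All graphs are finite, simple, undirected and connected. A graph is edge-regular with parameters $(n,k,\lambda)$ if it has $n$ vertices, is $k$-regular, and any two adjacent vertices have exactly $\lambda$ common neighbours. A clique $C$ is a regular clique with nexus $a$ if every vertex not in $C$ has exactly $a$ neighbours in $C$. A Neumaier graph is a non-complete edge-regular graph containing a regular clique; it has parameters $(n,k,\lambda;a,c)$ if it is edge-regular with parameters $(n,k,\lambda)$ and contains a regular clique of size $c$ with nexus $a$. *)

From mathcomp Require Import all_boot.
Set Implicit Arguments.
Unset Strict Implicit.
Unset Printing Implicit Defensive.

Section Graphs.
Variable T : finType.
Variable e : rel T.

Definition simple_graph : Prop := symmetric e /\ irreflexive e.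

Definition connected_graph : Prop := forall x y : T, connect e x y.

Definition complete_graph : Prop := forall x y : T, x != y -> e x y.

Definition edge_regular (n k lam : nat) : Prop :=
  [/\ #|T| = n,
      forall x : T, #|[set y | e x y]| = k &
      forall x y : T, e x y -> #|[set z | e x z && e y z]| = lam].

Definition is_clique (C : {set T}) : Prop :=
  forall x y, x \in C -> y \in C -> x != y -> e x y.

Definition regular_clique (C : {set T}) (a : nat) : Prop :=
  is_clique C /\ forall x, x \notin C -> #|[set y in C | e x y]| = a.

Definition neumaier_params (n k lam a c : nat) : Prop :=
  [/\ ~ complete_graph, edge_regular n k lam &
      exists C : {set T}, #|C| = c /\ regular_clique C a].
End Graphs.

Definition C4_rel : rel 'I_4 :=
  fun i j => (j == (i.+1 %% 4) :> nat) || (i == (j.+1 %% 4) :> nat).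

Definition isomorphic_to_C4 (T : finType) (e : rel T) : Prop :=
  exists f : T -> 'I_4, bijective f /\ forall x y, e x y = C4_rel (f x) (f y).

(* Since the degree equals |C|, each vertex x of the clique C has exactly one
   neighbour [out x] outside C, and since the nexus is positive every vertex
   outside C is such an [out x].  Counting the common neighbours of two
   vertices of C gives lam = (k - 2) + [out x1 == out x2], so [out] is either
   constant on C, which makes the graph complete, or injective on C.  In the
   injective case the nexus is 1; the common neighbours of x and [out x] give
   a = lam + 1, so lam = 0 and C is an edge x1 x2, leaving only the 4-cycle
   x1, x2, out x2, out x1. *)

From mathcomp Require Import all_boot.
From mathcomp Require Import zify.

Set Implicit Arguments.
Unset Strict Implicit.
Unset Printing Implicit Defensive.

Section Graph.
Variables (T : finType) (e : rel T).
Hypotheses (e_sym : symmetric e) (e_irr : irreflexive e).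

Lemma regular_degree_gt0 k :
  connected_graph e -> ~ complete_graph e ->
  (forall x, #|[set y | e x y]| = k) -> 0 < k.
Proof.
move=> conn ncomp e_reg; rewrite lt0n; apply/eqP => k0; apply: ncomp => x y xy.
have /connectP [[|z p] /= ex_p last_p] := conn x y; first by rewrite last_p eqxx in xy.
case/andP: ex_p => exz _.
by have := card0_eq (etrans (e_reg x) k0) z; rewrite inE exz.
Qed.

Lemma edge_neq x y : e x y -> x != y.
Proof. by apply: contraTneq => ->; rewrite e_irr. Qed.

Lemma square_isomorphic_to_C4 (v0 v1 v2 v3 : T) :
  (forall x, x \in [:: v0; v1; v2; v3]) -> v0 != v2 -> v1 != v3 ->
  e v0 v1 -> e v1 v2 -> e v2 v3 -> e v3 v0 -> ~~ e v0 v2 -> ~~ e v1 v3 ->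
  isomorphic_to_C4 e.
Proof.
move=> cover v02 v13 e01 e12 e23 e30 ne02 ne13.
set s := [:: v0; v1; v2; v3].
have s_uniq : uniq s.
  rewrite /= !inE !negb_or v02 v13 (eq_sym v0 v3) !edge_neq //.
pose g (i : 'I_4) := nth v0 s i.
pose f x : 'I_4 := inord (index x s).
have fK : cancel f g.
  by move=> x; rewrite /f /g inordK ?nth_index ?index_mem.
have gK : cancel g f.
  by move=> i; rewrite /f /g index_uniq // inord_val.
have e_g i j : e (g i) (g j) = C4_rel i j.
  case: i j => [[|[|[|[|i]]]] ?] // [[|[|[|[|j]]]] ?] //=;
  by rewrite ?e_irr ?e01 ?e12 ?e23 ?e30 ?(negbTE ne02) ?(negbTE ne13) // e_sym
    ?e01 ?e12 ?e23 ?e30 ?(negbTE ne02) ?(negbTE ne13).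
exists f; split; first exact: Bijective fK gK.
by move=> x y; rewrite -e_g !fK.
Qed.
End Graph.

Section CliqueOfDegreeSize.
Variables (T : finType) (e : rel T).
Hypotheses (e_sym : symmetric e) (e_irr : irreflexive e).
Variables (C : {set T}) (k : nat).
Hypotheses (C_clique : is_clique e C) (card_C : #|C| = k).
Hypothesis e_reg : forall x, #|[set y | e x y]| = k.

Lemma nbrs_clique x : x \in C -> [set y | e x y] :&: C = C :\ x.
Proof.
move=> xC; apply/setP => y; rewrite !inE andbC.
have [->|yx] := eqVneq y x; first by rewrite e_irr andbF.
by case: (boolP (y \in C)) => // yC; apply: C_clique; rewrite // eq_sym.
Qed.

Lemma card_nbrs_out_clique x : x \in C -> #|[set y | e x y] :\: C| = 1.
Proof.
move=> xC; have := cardsID C [set y | e x y]; have := cardsD1 x C.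
by rewrite nbrs_clique // e_reg xC card_C; lia.
Qed.

(* For [x \in C] the pick succeeds by [card_nbrs_out_clique]; the default [x] is junk. *)
Definition out x := odflt x [pick y in [set y | e x y] :\: C].

Lemma nbrs_out_cliqueE x : x \in C -> [set y | e x y] :\: C = [set out x].
Proof.
move=> xC; have [y outE] := cards1P (introT eqP (card_nbrs_out_clique xC)).
rewrite /out outE; case: pickP => [z|/(_ y)]; last by rewrite set11.
by rewrite inE => /eqP ->.
Qed.

Lemma out_nbrP x y : x \in C -> (y \notin C) && e x y = (y == out x).
Proof. by move=> xC; rewrite -in_set1 -nbrs_out_cliqueE // !inE. Qed.

Lemma out_notin x : x \in C -> out x \notin C.
Proof. by move=> xC; have /andP[] := etrans (out_nbrP (out x) xC) (eqxx _). Qed.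

Lemma edge_out x : x \in C -> e x (out x).
Proof. by move=> xC; have /andP[] := etrans (out_nbrP (out x) xC) (eqxx _). Qed.

Lemma clique_nbrs_notin y : y \notin C ->
  [set x in C | e y x] = [set x in C | out x == y].
Proof.
by move=> yC; apply/setP => x; rewrite !inE; case: (boolP (x \in C)) => // xC;
  rewrite eq_sym -out_nbrP // yC e_sym.
Qed.

Variable a : nat.
Hypothesis nexus : forall y, y \notin C -> #|[set x in C | e y x]| = a.

Lemma nexus_gt0 x : x \in C -> 0 < a.
Proof.
move=> xC; rewrite -(nexus (out_notin xC)) clique_nbrs_notin ?out_notin //.
by apply/card_gt0P; exists x; rewrite !inE xC eqxx.
Qed.

Lemma notin_clique_out y : 0 < a -> y \notin C -> exists2 x, x \in C & y = out x.
Proof.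
move=> a_gt0 yC; have /card_gt0P [x] : 0 < #|[set x in C | e y x]| by rewrite nexus.
by rewrite clique_nbrs_notin // inE => /andP [xC /eqP <-]; exists x.
Qed.

Lemma complete_of_out_const x0 : x0 \in C ->
  {in C &, forall x1 x2, out x1 = out x2} -> complete_graph e.
Proof.
move=> x0C out_const.
have outside y : y \notin C -> y = out x0.
  by move=> yC; have [x xC ->] := notin_clique_out (nexus_gt0 x0C) yC; apply: out_const.
move=> x y xy; case: (boolP (x \in C)) => xC; case: (boolP (y \in C)) => yC.
- exact: C_clique.
- by rewrite (outside y yC) (out_const x0 x) ?edge_out.
- by rewrite (outside x xC) (out_const x0 y) // e_sym edge_out.
- by rewrite (outside x xC) (outside y yC) eqxx in xy.
Qed.

Variable lam : nat.
Hypothesis e_lam : forall x y, e x y -> #|[set z | e x z && e y z]| = lam.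

Lemma nexus_eq_lamS x : x \in C -> a = lam.+1.
Proof.
move=> xC; rewrite -(e_lam (edge_out xC)) -(nexus (out_notin xC)).
rewrite (cardsD1 x) inE xC e_sym edge_out //; congr _.+1; apply: eq_card => y.
rewrite !inE; have [->|yx] //= := eqVneq y x; first by rewrite e_irr.
case: (boolP (y \in C)) => yC /=; first by rewrite (C_clique xC yC) // eq_sym.
case exy: (e x y) => //=.
have /eqP -> : y == out x by rewrite -out_nbrP // yC exy.
by rewrite e_irr.
Qed.

Lemma lam_clique_pair x1 x2 : x1 \in C -> x2 \in C -> x1 != x2 ->
  lam = (k - 2) + (out x1 == out x2).
Proof.
move=> x1C x2C x12; rewrite -(e_lam (C_clique x1C x2C x12)).
set common := [set z | e x1 z && e x2 z].
have commonC : common :&: C = C :\ x1 :\ x2.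
  apply/setP => z; rewrite !inE.
  have [->|zx2] := eqVneq z x2; first by rewrite e_irr andbF.
  have [->|zx1] := eqVneq z x1; first by rewrite e_irr.
  by case: (boolP (z \in C)) => zC; rewrite ?andbF // !C_clique // eq_sym.
have common_out : common :\: C = [set z | (z == out x1) && (z == out x2)].
  by apply/setP => z; rewrite !inE -!out_nbrP //; case: (z \in C); rewrite ?andbF.
rewrite -(cardsID C common) commonC common_out.
have := cardsD1 x1 C; have := cardsD1 x2 (C :\ x1).
rewrite x1C !inE x2C eq_sym x12 card_C /=.
have [<-|out12] := eqVneq (out x1) (out x2).
  have -> : [set z | (z == out x1) && (z == out x1)] = [set out x1].
    by apply/setP => z; rewrite !inE andbb.
  by rewrite cards1; lia.
have -> : [set z | (z == out x1) && (z == out x2)] = set0.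
  by apply/setP => z; rewrite !inE; case: eqP => //= ->; apply: negbTE.
by rewrite cards0; lia.
Qed.

Lemma out_nonconstant_on_clique x0 : x0 \in C -> ~ complete_graph e ->
  exists x1 x2, [/\ x1 \in C, x2 \in C & out x1 != out x2].
Proof.
move=> x0C ncomp.
have [/forall_inP out_const | /forall_inPn [x1 x1C /forall_inPn [x2 x2C out12]]] :=
  boolP [forall x1 in C, [forall x2 in C, out x1 == out x2]]; last by exists x1, x2.
case: ncomp; apply: (complete_of_out_const x0C) => x1 x2 x1C x2C.
by apply/eqP; move/forall_inP: (out_const x1 x1C); apply.
Qed.

Lemma out_injective_on_clique x1 x2 : x1 \in C -> x2 \in C -> out x1 != out x2 ->
  {in C &, injective out}.
Proof.
move=> x1C x2C out12 x x' xC x'C outx; case: (eqVneq x x') => // xx'.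
have x12 : x1 != x2 by apply: contraNneq out12 => ->.
have := lam_clique_pair x1C x2C x12.
by rewrite (lam_clique_pair xC x'C xx') outx eqxx (negbTE out12); lia.
Qed.

Lemma nexus_eq1 x : x \in C -> {in C &, injective out} -> a = 1.
Proof.
move=> xC out_inj; rewrite -(nexus (out_notin xC)) clique_nbrs_notin ?out_notin //.
rewrite -(cards1 x); apply: eq_card => y; rewrite !inE.
by apply/andP/eqP => [[yC /eqP /out_inj] | ->]; [apply | rewrite xC eqxx].
Qed.

Lemma isomorphic_to_C4_of_clique_pair x1 x2 :
  C = [set x1; x2] -> out x1 != out x2 -> isomorphic_to_C4 e.
Proof.
move=> C12 out12.
have [x1C x2C] : x1 \in C /\ x2 \in C by rewrite C12 !inE !eqxx orbT.
have x12 : x1 != x2 by apply: contraNneq out12 => ->.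
have cover z : z \in [:: x1; x2; out x2; out x1].
  case: (boolP (z \in C)) => [|zC]; first by rewrite C12 !inE => /orP [] ->; rewrite ?orbT.
  have [x] := notin_clique_out (nexus_gt0 x1C) zC.
  by rewrite C12 !inE => /orP [] /eqP -> ->; rewrite eqxx ?orbT.
have not_out x y : x \in C -> y \in C -> out x != out y -> ~~ e x (out y).
  move=> xC yC outxy; have := out_nbrP (out y) xC.
  by rewrite out_notin //= eq_sym (negbTE outxy) => ->.
have out21 : e (out x2) (out x1).
  apply: contraT => ne; have : [set y | e (out x1) y] \subset [set x1].
    apply/subsetP => y; rewrite !inE; move: (cover y); rewrite !inE.
    case/or4P => /eqP -> //; rewrite ?e_irr // e_sym ?(negbTE ne) //.
    by rewrite (negbTE (not_out _ _ x2C x1C _)) // eq_sym.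
  by move/subset_leq_card; rewrite e_reg -card_C C12 cards1 cards2 x12.
apply: (square_isomorphic_to_C4 e_sym e_irr cover).
- by apply: contraNneq (out_notin x2C) => <-.
- by apply: contraNneq (out_notin x1C) => <-.
- exact: C_clique.
- exact: edge_out.
- exact: out21.
- by rewrite e_sym edge_out.
- exact: not_out.
- by apply: not_out; rewrite // eq_sym.
Qed.

Lemma noncomplete_isomorphic_to_C4 : ~ complete_graph e -> 0 < k -> isomorphic_to_C4 e.
Proof.
move=> ncomp k_gt0.
have [x0 x0C] : exists x0, x0 \in C by apply/card_gt0P; rewrite card_C.
have [x1 [x2 [x1C x2C out12]]] := out_nonconstant_on_clique x0C ncomp.
have x12 : x1 != x2 by apply: contraNneq out12 => ->.
have lam0 : lam = 0.
  have := nexus_eq_lamS x1C.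
  by rewrite (nexus_eq1 x1C (out_injective_on_clique x1C x2C out12)); case.
apply: (isomorphic_to_C4_of_clique_pair (x1 := x1) (x2 := x2) _ out12).
apply/eqP; rewrite eq_sym eqEcard !subUset !sub1set x1C x2C cards2 x12 card_C /=.
by have := lam_clique_pair x1C x2C x12; rewrite lam0 (negbTE out12); lia.
Qed.
End CliqueOfDegreeSize.

Theorem proposition3p10 (T : finType) (e : rel T) (n k lam a c : nat) :
  simple_graph e -> connected_graph e ->
  neumaier_params e n k lam a c ->
  c = k ->
  isomorphic_to_C4 e.
Proof.
move=> [e_sym e_irr] conn [ncomp [_ e_reg e_lam] [C [card_C [C_clique nexus]]]] ck.
rewrite ck in card_C.
apply: (noncomplete_isomorphic_to_C4 e_sym e_irr C_clique card_C e_reg nexus e_lam ncomp).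
exact: regular_degree_gt0 conn ncomp e_reg.
Qed.
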